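(* Let $\Omega$ be a Polish space with its Borel $\sigma$-algebra, and let $F$ and $R$ be partially ordered topological spaces that are Souslin spaces and whose order relations are Borel subsets of $F\times F$ and $R\times R$ respectively. Let $\mathrm{DP}_\Omega(F,R)$ be the set of all upper sets $\mathrm{dp}$ of $F^{\mathrm{op}}\times R$ of the form $\mathrm{dp}=\uparrow A$ for some analytic set $A\subseteq F^{\mathrm{op}}\times R$, and let $\mathcal{R}$ be the set of maps $\alpha:\Omega\to \mathrm{DP}_\Omega(F,R)$ whose feasible set $\{(\omega,x_F,x_R) : (x_F,x_R)\in\alpha(\omega)\}\subseteq \Omega\times F\times R$ is analytic. Then $(\mathrm{DP}_\Omega(F,R),\mathcal{R})$ is a quasi-universal space; that is, (i) for each $\mathrm{dp}\in\mathrm{DP}_\Omega(F,R)$ the constant map $\omega\mapsto \mathrm{dp}$ lies in $\mathcal{R}$, and (ii) for each $\alpha\in\mathcal{R}$ and each Borel measurable $\varphi:\Omega\to\Omega$, $\alpha\circ\varphi\in\mathcal{R}$.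
   Context: A Souslin space is a Hausdorff space that is a continuous image of a Polish space; a subset of a Hausdorff space is analytic if it is a continuous image of a Polish space. $F^{\mathrm{op}}$ is $F$ with reversed order; $F^{\mathrm{op}}\times R$ has the componentwise order and product topology. An upper set $U$ satisfies: if $u\in U$ and $u\preceq v$ then $v\in U$; $\uparrow A$ denotes the set of elements above some element of $A$. A quasi-measurable space over the sample space $\Omega$ is a set $A$ together with a set of maps $\Omega\to A$ (''random variables'') containing all constant maps and closed under precomposition with Borel measurable maps $\Omega\to\Omega$; it is called a quasi-universal space when $\Omega$ is Polish. *)

From HB Require Import structures.
From mathcomp Require Import all_boot all_order all_algebra.
From mathcomp Require Import all_classical all_reals all_analysis.
From mathcomp Require Import Rstruct Rstruct_topology.
Set Implicit Arguments. Unset Strict Implicit. Unset Printing Implicit Defensive.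
Import Order.TTheory GRing.Theory Num.Theory.
Local Open Scope classical_set_scope.
Local Open Scope ring_scope.

Notation Real := Rdefinitions.R.

Definition is_metric (T : Type) (d : T -> T -> Real) : Prop :=
  (forall x y, 0 <= d x y) /\ (forall x y, d x y = 0 <-> x = y) /\
  (forall x y, d x y = d y x) /\ (forall x y z, d x z <= d x y + d y z).

Definition polish (T : topologicalType) : Prop :=
  exists d : T -> T -> Real,
    is_metric d /\
    (forall A : set T, open A <->
       (forall x, A x -> exists e : Real, 0 < e /\ [set y | d x y < e] `<=` A)) /\
    (forall u : nat -> T,
       (forall e : Real, 0 < e -> exists N, forall m n, (N <= m)%N -> (N <= n)%N ->
          d (u m) (u n) < e) ->
       exists x, forall e : Real, 0 < e -> exists N, forall n, (N <= n)%N -> d (u n) x < e) /\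
    (exists D : set T, countable D /\
       forall U : set T, open U -> U !=set0 -> (U `&` D) !=set0).

Definition analytic (X : topologicalType) (A : set X) : Prop :=
  exists (P : topologicalType) (f : P -> X), polish P /\ continuous f /\ range f = A.

Definition souslin (X : topologicalType) : Prop :=
  hausdorff_space X /\ analytic (@setT X).

Definition borel (X : topologicalType) : set (set X) := <<s @open X >>.

Definition borel_measurable (X Y : topologicalType) (f : X -> Y) : Prop :=
  forall B : set Y, borel B -> borel (f @^-1` B).

Definition partial_order (T : Type) (le : T -> T -> Prop) : Prop :=
  (forall x, le x x) /\ (forall x y, le x y -> le y x -> x = y) /\
  (forall x y z, le x y -> le y z -> le x z).

Definition le_opprod (F R : Type) (leF : F -> F -> Prop) (leR : R -> R -> Prop)
  (u v : F * R) : Prop := leF v.1 u.1 /\ leR u.2 v.2.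

Definition upper_set (T : Type) (le : T -> T -> Prop) (U : set T) : Prop :=
  forall u v, U u -> le u v -> U v.

Definition upclosure (T : Type) (le : T -> T -> Prop) (A : set T) : set T :=
  [set v | exists2 u, A u & le u v].

Definition is_DP (F R : topologicalType) (leF : F -> F -> Prop) (leR : R -> R -> Prop)
  (dp : set (F * R)) : Prop :=
  upper_set (le_opprod leF leR) dp /\
  exists A : set (F * R), analytic A /\ dp = upclosure (le_opprod leF leR) A.

Definition DP (F R : topologicalType) (leF : F -> F -> Prop) (leR : R -> R -> Prop) :=
  {dp : set (F * R) | is_DP leF leR dp}.

Definition DP_RV (Omega F R : topologicalType) (leF : F -> F -> Prop) (leR : R -> R -> Prop)
  : set (Omega -> DP leF leR) :=
  [set alpha | analytic [set p : Omega * (F * R) | proj1_sig (alpha p.1) p.2]].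

Definition quasi_measurable_space (Omega : topologicalType) (A : Type)
  (RV : set (Omega -> A)) : Prop :=
  (forall a : A, RV (fun _ => a)) /\
  (forall (alpha : Omega -> A) (phi : Omega -> Omega),
      RV alpha -> borel_measurable phi -> RV (alpha \o phi)).

Definition quasi_universal_space (Omega : topologicalType) (A : Type)
  (RV : set (Omega -> A)) : Prop :=
  polish Omega /\ quasi_measurable_space RV.
Arguments DP_RV Omega {F R} leF leR.

From Pilot Require Import Defs.
From HB Require Import structures.
From mathcomp Require Import all_boot all_order all_algebra.
From mathcomp Require Import all_classical all_reals all_analysis.
From mathcomp Require Import Rstruct Rstruct_topology lra.
Set Implicit Arguments. Unset Strict Implicit. Unset Printing Implicit Defensive.
Import Order.TTheory GRing.Theory Num.Theory.
Local Open Scope classical_set_scope.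
Local Open Scope ring_scope.

(* Analytic sets are stable under continuous images, finite products, countable
   unions, countable intersections in Hausdorff spaces and intersections with
   Borel sets, and Borel subsets of Polish spaces are analytic.
   For a constant map the feasible set is [Omega x up A], and [up A] is the
   projection of [A x (F x R)] cut by the Borel order of [F^op x R].  For
   [alpha o phi] it is the image of [Omega x S_alpha] cut by the graph of [phi]
   under [(w, (w', x)) |-> (w, x)]; this graph is Borel since [Omega] has a
   countable family of open sets separating its points. *)

Lemma natSinv_gt0 (R : numFieldType) (k : nat) : 0 < k.+1%:R^-1 :> R.
Proof. by rewrite invr_gt0 ltr0Sn. Qed.

Lemma natSinv_le (R : numFieldType) (k K : nat) :
  (k <= K)%N -> K.+1%:R^-1 <= k.+1%:R^-1 :> R.
Proof. by move=> kK; rewrite lef_pV2 ?posrE ?ltr0Sn // ler_nat ltnS. Qed.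

Lemma natSinv_lt (R : archiRealFieldType) (e : R) : 0 < e -> exists k, k.+1%:R^-1 < e.
Proof.
by move=> e0; have [N _ /(_ N (leqnn N))] := near_infty_natSinv_lt (PosNum e0); exists N.
Qed.

Lemma ltr_half (R : numFieldType) (e : R) : 0 < e -> e / 2 < e.
Proof. by move=> e0; rewrite ltr_pdivrMr // ltr_pMr // ltr1n. Qed.

(** * Complete separable metric spaces *)

Definition cauchy_seq (T : Type) (d : T -> T -> Defs.Real) (u : nat -> T) : Prop :=
  forall e : Defs.Real, 0 < e -> exists N, forall m n, (N <= m)%N -> (N <= n)%N ->
    d (u m) (u n) < e.

Definition complete_dist (T : Type) (d : T -> T -> Defs.Real) : Prop :=
  forall u : nat -> T, cauchy_seq d u ->
  exists x, forall e : Defs.Real, 0 < e -> exists N, forall n, (N <= n)%N -> d (u n) x < e.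

(* A dense sequence is only required when [T] is inhabited, so that the empty
   space qualifies. *)
Definition separable_dist (T : Type) (d : T -> T -> Defs.Real) : Prop :=
  forall x0 : T, exists s : nat -> T, forall x e, 0 < e -> exists n, d x (s n) < e.

Record polishMetric := PolishMetric {
  pm_sort :> Type;
  pm_dist : pm_sort -> pm_sort -> Defs.Real;
  pm_metric : is_metric pm_dist;
  pm_complete : complete_dist pm_dist;
  pm_separable : separable_dist pm_dist }.

Section polishMetric_theory.
Variable M : polishMetric.
Implicit Types x y z : M.

Lemma pm_dist_ge0 x y : 0 <= pm_dist x y.
Proof. by case: (pm_metric M). Qed.

Lemma pm_dist_eq0 x y : pm_dist x y = 0 <-> x = y.
Proof. by case: (pm_metric M) => _ []. Qed.

Lemma pm_distxx x : pm_dist x x = 0.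
Proof. exact/pm_dist_eq0. Qed.

Lemma pm_distC x y : pm_dist x y = pm_dist y x.
Proof. by case: (pm_metric M) => _ [_ []]. Qed.

Lemma pm_dist_triangle x y z : pm_dist x z <= pm_dist x y + pm_dist y z.
Proof. by case: (pm_metric M) => _ [_ [_]]. Qed.

End polishMetric_theory.

Definition pm_space (M : polishMetric) : Type := pm_sort M.
HB.instance Definition _ (M : polishMetric) := gen_eqMixin (pm_space M).
HB.instance Definition _ (M : polishMetric) := gen_choiceMixin (pm_space M).
HB.instance Definition _ (M : polishMetric) :=
  @isMetric.Build Defs.Real (pm_space M) (@pm_dist M) (@pm_distxx M)
    (fun x y => proj1 (pm_dist_eq0 x y)) (@pm_distC M)
    (fun y x z => pm_dist_triangle x y z).

Section pm_space_topology.
Variable M : polishMetric.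
Implicit Types (x : pm_space M) (A U : set (pm_space M)).

Lemma pm_nbhsP x U :
  nbhs x U <-> exists2 e : Defs.Real, 0 < e & forall y, pm_dist x y < e -> U y.
Proof.
rewrite -metricType_numDomainType.filter_from_mdist_nbhs.
by split=> -[e e0 eU]; exists e.
Qed.

Lemma pm_openP A :
  open A <-> forall x, A x -> exists2 e : Defs.Real, 0 < e & forall y, pm_dist x y < e -> A y.
Proof. by rewrite openE; split=> oA x /oA /pm_nbhsP. Qed.

Lemma pm_closedP A :
  closed A <->
  forall x, (forall e : Defs.Real, 0 < e -> exists y, A y /\ pm_dist x y < e) -> A x.
Proof.
split=> [clA x xA | clA x xA]; apply: clA.
  by move=> B /pm_nbhsP[e e0 eB]; have [y [Ay /eB By]] := xA e e0; exists y.
move=> e e0; have [|y [Ay By]] := xA [set y | pm_dist x y < e].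
  by apply/pm_nbhsP; exists e.
by exists y.
Qed.

Lemma pm_continuousP (X : topologicalType) (f : pm_space M -> X) :
  continuous f <-> forall x (V : set X), nbhs (f x) V ->
    exists2 e : Defs.Real, 0 < e & forall y, pm_dist x y < e -> V (f y).
Proof. by split=> cf x V /cf /pm_nbhsP. Qed.

End pm_space_topology.

Lemma pm_continuous_dist (M N : polishMetric) (f : pm_space M -> pm_space N) :
  (forall x (e : Defs.Real), 0 < e ->
    exists2 d : Defs.Real, 0 < d & forall y, pm_dist x y < d -> pm_dist (f x) (f y) < e) ->
  continuous f.
Proof.
move=> fc; apply/pm_continuousP => x U /pm_nbhsP[e e0 eU].
by have [d d0 dU] := fc x e e0; exists d => // y /dU /eU.
Qed.

Lemma pm_space_polish (M : polishMetric) : polish (pm_space M).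
Proof.
exists (@pm_dist M); split; first exact: pm_metric.
split.
  move=> A; rewrite pm_openP; split=> oA x /oA.
    by case=> e e0 eA; exists e; split => // y /eA.
  by case=> e [e0 eA]; exists e => // y /eA.
split; first exact: pm_complete.
have [[x0 _]|P0] := pselect (exists x : M, True); last first.
  by exists set0; split => // U _ [x _]; case: P0; exists x.
have [s sd] := pm_separable x0.
exists (range s); split; first exact: card_image_le.
move=> U /pm_openP oU [x Ux]; have [e e0 eU] := oU x Ux.
by have [n xsn] := sd x e e0; exists (s n); split; [exact: eU | exists n].
Qed.

Section polish_metric.
Variables (P : topologicalType) (P_polish : polish P).

Definition polish_dist : P -> P -> Defs.Real := proj1_sig (cid P_polish).
Let polish_dist_spec := proj2_sig (cid P_polish).

Lemma polish_dist_metric : is_metric polish_dist.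
Proof. by case: polish_dist_spec. Qed.

Lemma polish_dist_complete : complete_dist polish_dist.
Proof. by case: polish_dist_spec => _ [_ []]. Qed.

Lemma polish_openP (A : set P) : open A <->
  forall x, A x -> exists2 e : Defs.Real, 0 < e & forall y, polish_dist x y < e -> A y.
Proof.
case: polish_dist_spec => _ [-> _].
by split=> oA x /oA[e]; [case=> e0 eA | move=> e0 eA]; exists e => // y /eA.
Qed.

Lemma polish_ball_open x e : open [set y | polish_dist x y < e].
Proof.
apply/polish_openP => y /= xy; exists (e - polish_dist x y); first by rewrite subr_gt0.
case: polish_dist_metric => _ [_ [_ tri]] z yz.
by have := tri x y z; lra.
Qed.

Lemma polish_dist_separable : separable_dist polish_dist.
Proof.
case: polish_dist_spec => _ [_ [_ [D [cD Ddense]]]] x0.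
have [_ [d0 _]] := polish_dist_metric.
have [f /(_ _ _ (mem_set _) (mem_set _)) f_inj] := countable_injP _ cD.
pose s n := if pselect (exists2 y, D y & f y = n) is left ex then sval (cid2 ex) else x0.
exists s => x e e0.
have [|y [/= xy Dy]] := Ddense _ (polish_ball_open x e).
  by exists x; rewrite /= (proj2 (d0 x x) erefl).
exists (f y); rewrite /s; case: pselect => [ex|]; last by case; exists y.
by case: cid2 => z /= Dz /(f_inj _ _ Dz Dy) ->.
Qed.

Definition pm_of_polish : polishMetric :=
  PolishMetric polish_dist_metric polish_dist_complete polish_dist_separable.

Lemma pm_of_polish_open (A : set P) : @open (pm_space pm_of_polish) A <-> open A.
Proof. by rewrite pm_openP polish_openP. Qed.

Lemma pm_of_polish_id_continuous : continuous (id : pm_space pm_of_polish -> P).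
Proof. by apply/continuousP => A /pm_of_polish_open. Qed.

End polish_metric.

(** * Analytic sets *)

Lemma analyticP (X : topologicalType) (A : set X) : analytic A <->
  exists (M : polishMetric) (f : pm_space M -> X), continuous f /\ range f = A.
Proof.
split=> [[P [f [Ppolish [cf <-]]]] | [M [f [cf <-]]]]; last first.
  by exists (pm_space M), f; split; [exact: pm_space_polish |].
exists (pm_of_polish Ppolish), (f \o (id : pm_space (pm_of_polish Ppolish) -> P)).
split => // x.
exact: continuous_comp (@pm_of_polish_id_continuous _ Ppolish x) (cf x).
Qed.

Lemma analytic_image (X Y : topologicalType) (A : set X) (g : X -> Y) :
  analytic A -> continuous g -> analytic (g @` A).
Proof.
move=> /analyticP[M [f [cf <-]]] cg; apply/analyticP; exists M, (g \o f); split.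
  by move=> x; apply: continuous_comp; [exact: cf | exact: cg].
by rewrite image_comp.
Qed.

Section closed_subspace.
Variables (M : polishMetric) (C : set (pm_space M)) (C_closed : closed C).

Definition sub_dist (a b : {x : M | C x}) : Defs.Real := pm_dist (sval a) (sval b).

Lemma sub_dist_metric : is_metric sub_dist.
Proof.
split; first by move=> *; exact: pm_dist_ge0.
split; last split; last by move=> *; exact: pm_dist_triangle.
  move=> [a Ca] [b Cb]; rewrite /sub_dist /= pm_dist_eq0.
  by split=> [ab | [->]] //; subst b; congr exist; exact: Prop_irrelevance.
by move=> *; exact: pm_distC.
Qed.

Lemma sub_dist_complete : complete_dist sub_dist.
Proof.
move=> u /(@pm_complete M (sval \o u))[x ux].
have Cx : C x.
  apply: (proj1 (pm_closedP C) C_closed) => e /ux[N uN].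
  by exists (sval (u N)); split; [exact: svalP | rewrite pm_distC; exact: uN].
by exists (exist _ x Cx).
Qed.

(* From a dense sequence [s] of [M], pick for every [(n, k)] a point of [C] in
   the ball of radius [1/(k+1)] around [s n], when there is one. *)
Lemma sub_dist_separable : separable_dist sub_dist.
Proof.
move=> c0; have [s s_dense] := pm_separable (sval c0).
pose near_s (p : nat * nat) :=
  if pselect (exists c : {x : M | C x}, pm_dist (s p.1) (sval c) < p.2.+1%:R^-1)
  is left ex then sval (cid ex) else c0.
exists (fun m => if unpickle m is Some p then near_s p else c0) => c e e0.
have e20 : 0 < e / 2 by rewrite divr_gt0.
have [k ke] := natSinv_lt e20.
have [n cn] := s_dense (sval c) _ (natSinv_gt0 _ k).
exists (pickle (n, k)); rewrite pickleK /near_s /=.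
case: pselect => [ex|]; last by case; exists c; rewrite pm_distC.
case: cid => c' /= nc'; rewrite /sub_dist.
apply: le_lt_trans (pm_dist_triangle _ (s n) _) _.
by rewrite [e]splitr ltrD // (lt_trans _ ke).
Qed.

Definition pm_sub : polishMetric :=
  PolishMetric sub_dist_metric sub_dist_complete sub_dist_separable.

Lemma pm_sub_val_continuous : continuous (sval : pm_space pm_sub -> pm_space M).
Proof. by apply: pm_continuous_dist => x e e0; exists e. Qed.

End closed_subspace.

Lemma analytic_closed (M : polishMetric) (C : set (pm_space M)) :
  closed C -> analytic C.
Proof.
move=> C_closed; apply/analyticP.
exists (pm_sub C_closed), (sval : pm_space (pm_sub C_closed) -> pm_space M).
split; first exact: pm_sub_val_continuous.
apply/seteqP; split=> [_ [[x Cx] _ <-] // | x Cx].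
by exists (exist _ x Cx).
Qed.

Section product.
Variables M1 M2 : polishMetric.

Definition prod_dist (a b : M1 * M2) : Defs.Real :=
  Num.max (pm_dist a.1 b.1) (pm_dist a.2 b.2).

Lemma prod_dist_fst a b : pm_dist a.1 b.1 <= prod_dist a b.
Proof. by rewrite le_max lexx. Qed.

Lemma prod_dist_snd a b : pm_dist a.2 b.2 <= prod_dist a b.
Proof. by rewrite le_max lexx orbT. Qed.

Lemma prod_dist_metric : is_metric prod_dist.
Proof.
split; first by move=> a b; exact: le_trans (pm_dist_ge0 _ _) (prod_dist_fst a b).
split; last split.
- move=> [a1 a2] [b1 b2]; split=> [ab0 | [-> ->]]; last first.
    by rewrite /prod_dist /= !pm_distxx maxxx.
  have d0 (M : polishMetric) (x y : M) : pm_dist x y <= 0 -> x = y.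
    by move=> xy; apply/pm_dist_eq0/eqP; rewrite eq_le xy pm_dist_ge0.
  have := prod_dist_fst (a1, a2) (b1, b2); have := prod_dist_snd (a1, a2) (b1, b2).
  by rewrite ab0 /= => /d0 -> /d0 ->.
- by move=> a b; rewrite /prod_dist pm_distC [pm_dist a.2 _]pm_distC.
- move=> a b c; rewrite /prod_dist ge_max.
  by rewrite !(le_trans (pm_dist_triangle _ b.1 _)) ?(le_trans (pm_dist_triangle _ b.2 _))
    ?lerD ?prod_dist_fst ?prod_dist_snd.
Qed.

Lemma prod_dist_complete : complete_dist prod_dist.
Proof.
move=> u u_cauchy.
have [x1 ux1] : exists x1, forall e : Defs.Real, 0 < e ->
    exists N, forall n, (N <= n)%N -> pm_dist (u n).1 x1 < e.
  apply: pm_complete => e /u_cauchy[N uN]; exists N => m n mN nN.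
  exact: le_lt_trans (prod_dist_fst _ _) (uN m n mN nN).
have [x2 ux2] : exists x2, forall e : Defs.Real, 0 < e ->
    exists N, forall n, (N <= n)%N -> pm_dist (u n).2 x2 < e.
  apply: pm_complete => e /u_cauchy[N uN]; exists N => m n mN nN.
  exact: le_lt_trans (prod_dist_snd _ _) (uN m n mN nN).
exists (x1, x2) => e e0.
have [N1 uN1] := ux1 e e0; have [N2 uN2] := ux2 e e0.
exists (maxn N1 N2) => n; rewrite geq_max => /andP[nN1 nN2].
by rewrite /prod_dist gt_max uN1 ?uN2.
Qed.

Lemma prod_dist_separable : separable_dist prod_dist.
Proof.
move=> x0; have [s1 s1_dense] := pm_separable x0.1.
have [s2 s2_dense] := pm_separable x0.2.
exists (fun m => if unpickle m is Some p then (s1 p.1, s2 p.2) else x0) => x e e0.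
have [n1 xn1] := s1_dense x.1 e e0; have [n2 xn2] := s2_dense x.2 e e0.
by exists (pickle (n1, n2)); rewrite pickleK /prod_dist gt_max xn1 xn2.
Qed.

Definition pm_prod : polishMetric :=
  PolishMetric prod_dist_metric prod_dist_complete prod_dist_separable.

Lemma pm_prod_fst_continuous : continuous (fst : pm_space pm_prod -> pm_space M1).
Proof.
by apply: pm_continuous_dist => x e e0; exists e => // y /(le_lt_trans (prod_dist_fst _ _)).
Qed.

Lemma pm_prod_snd_continuous : continuous (snd : pm_space pm_prod -> pm_space M2).
Proof.
by apply: pm_continuous_dist => x e e0; exists e => // y /(le_lt_trans (prod_dist_snd _ _)).
Qed.

End product.

Lemma continuous_fst (X Y : topologicalType) : continuous (@fst X Y).
Proof. by move=> [x y]; exact: cvg_fst. Qed.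

Lemma continuous_snd (X Y : topologicalType) : continuous (@snd X Y).
Proof. by move=> [x y]; exact: cvg_snd. Qed.

Lemma continuous_pair (T X Y : topologicalType) (f : T -> X) (g : T -> Y) :
  continuous f -> continuous g -> continuous (fun t => (f t, g t)).
Proof. by move=> cf cg t; apply: cvg_pair; [exact: cf | exact: cg]. Qed.

Lemma analytic_setX (X Y : topologicalType) (A : set X) (B : set Y) :
  analytic A -> analytic B -> analytic (A `*` B).
Proof.
move=> /analyticP[M1 [f1 [cf1 <-]]] /analyticP[M2 [f2 [cf2 <-]]]; apply/analyticP.
exists (pm_prod M1 M2), (fun p : pm_space (pm_prod M1 M2) => (f1 p.1, f2 p.2)); split.
  apply: continuous_pair => p.
    exact: (continuous_comp (@pm_prod_fst_continuous M1 M2 p) (cf1 _)).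
  exact: (continuous_comp (@pm_prod_snd_continuous M1 M2 p) (cf2 _)).
apply/seteqP; split=> [_ [[a b] _ <-] | [x y] [/= [a _ <-] [b _ <-]]].
  by split; [exists a | exists b].
by exists (a, b).
Qed.

Lemma le_min_triangle (R : realDomainType) (v a b c : R) :
  0 <= v -> 0 <= a -> 0 <= b -> c <= a + b ->
  Num.min v c <= Num.min v a + Num.min v b.
Proof.
move=> v0 a0 b0 cab; have minv_ge0 x : 0 <= x -> 0 <= Num.min v x.
  by move=> x0; rewrite le_min v0.
have minvc_le : Num.min v c <= v by rewrite ge_min lexx.
case: (leP v a) => _; first by apply: le_trans minvc_le _; rewrite lerDl minv_ge0.
case: (leP v b) => _; first by apply: le_trans minvc_le _; rewrite lerDr.
by rewrite ge_min cab orbT.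
Qed.

Section countable_product.
Variable M : nat -> polishMetric.
Implicit Types x y z : forall k, M k.

(* The [k]-th coordinate is truncated at [1/(k+1)], so that the supremum is
   finite and small distances only constrain finitely many coordinates. *)
Definition pi_term x y k : Defs.Real := Num.min k.+1%:R^-1 (pm_dist (x k) (y k)).

Definition pi_dist x y : Defs.Real := sup (range (pi_term x y)).

Lemma pi_term_ge0 x y k : 0 <= pi_term x y k.
Proof. by rewrite le_min ltW ?natSinv_gt0 ?pm_dist_ge0. Qed.

Lemma pi_term_le_natSinv x y k : pi_term x y k <= k.+1%:R^-1.
Proof. by rewrite ge_min lexx. Qed.

Lemma pi_term_le_dist x y k : pi_term x y k <= pm_dist (x k) (y k).
Proof. by rewrite ge_min lexx orbT. Qed.

Lemma pi_term_le_pi_dist x y k : pi_term x y k <= pi_dist x y.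
Proof.
apply: sup_upper_bound; last by exists k.
split; first by exists (pi_term x y 0), 0%N.
exists 1 => _ [i _ <-]; apply: le_trans (pi_term_le_natSinv x y i) _.
by rewrite invf_le1 ?ltr0Sn // ler1n.
Qed.

Lemma pi_dist_ge0 x y : 0 <= pi_dist x y.
Proof. exact: le_trans (pi_term_ge0 x y 0) (pi_term_le_pi_dist x y 0). Qed.

Lemma pi_dist_le x y c : (forall k, pi_term x y k <= c) -> pi_dist x y <= c.
Proof.
by move=> xyc; apply: ge_sup; [exists (pi_term x y 0), 0%N | move=> _ [k _ <-]].
Qed.

Lemma pi_dist_coord x y k : pi_dist x y < k.+1%:R^-1 -> pm_dist (x k) (y k) <= pi_dist x y.
Proof.
move=> xyk; have := pi_term_le_pi_dist x y k; rewrite /pi_term.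
case: (leP k.+1%:R^-1 (pm_dist (x k) (y k))) => // _ /le_lt_trans/(_ xyk).
by rewrite ltxx.
Qed.

Lemma pi_dist_small x y (e : Defs.Real) K :
  K.+1%:R^-1 <= e -> (forall k, (k < K)%N -> pm_dist (x k) (y k) <= e) -> pi_dist x y <= e.
Proof.
move=> Ke xye; apply: pi_dist_le => k; case: (ltnP k K) => kK.
  exact: le_trans (pi_term_le_dist x y k) (xye k kK).
exact: le_trans (pi_term_le_natSinv x y k) (le_trans (natSinv_le _ kK) Ke).
Qed.

Lemma pi_dist_metric : is_metric pi_dist.
Proof.
split; first exact: pi_dist_ge0.
split; last split.
- move=> x y; split=> [xy0 | <-]; last first.
    apply/eqP; rewrite eq_le pi_dist_ge0 andbT; apply: pi_dist_le => k.
    by rewrite /pi_term pm_distxx ge_min lexx orbT.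
  apply: functional_extensionality_dep => k; apply/pm_dist_eq0.
  have := pi_term_le_pi_dist x y k; rewrite xy0 /pi_term ge_min.
  case/orP=> [|xyk]; first by rewrite leNgt natSinv_gt0.
  by apply/eqP; rewrite eq_le xyk pm_dist_ge0.
- move=> x y; rewrite /pi_dist; suff -> : pi_term x y = pi_term y x by [].
  by apply/funext => k; rewrite /pi_term pm_distC.
- move=> x y z; apply: pi_dist_le => k.
  apply: le_trans (lerD (pi_term_le_pi_dist x y k) (pi_term_le_pi_dist y z k)).
  apply: le_min_triangle (ltW (natSinv_gt0 _ k)) (pm_dist_ge0 _ _) (pm_dist_ge0 _ _) _.
  exact: pm_dist_triangle.
Qed.

Lemma pi_dist_complete : complete_dist pi_dist.
Proof.
move=> u u_cauchy.
have coord_cauchy k : cauchy_seq (@pm_dist (M k)) (fun n => u n k).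
  move=> e e0; have [|N uN] := u_cauchy (Num.min e k.+1%:R^-1).
    by rewrite lt_min e0 natSinv_gt0.
  exists N => m n mN nN; have := uN m n mN nN; rewrite lt_min => /andP[ue uk].
  exact: le_lt_trans (pi_dist_coord uk) ue.
pose l k := sval (cid (pm_complete (coord_cauchy k))).
have ul k : forall e : Defs.Real, 0 < e ->
    exists N, forall n, (N <= n)%N -> pm_dist (u n k) (l k) < e.
  by rewrite /l; case: cid.
exists l => e e0; have e20 : 0 < e / 2 by rewrite divr_gt0.
have [K Ke] := natSinv_lt e20.
have [N uN] : exists N, forall k n, (k < K)%N -> (N <= n)%N ->
    pm_dist (u n k) (l k) < e / 2.
  elim: K {Ke} => [|K [N uN]]; first by exists 0%N.
  have [N' uN'] := ul K _ e20.
  exists (maxn N N') => k n; rewrite ltnS leq_eqVlt geq_max.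
  by case/orP=> [/eqP -> | kK] /andP[nN nN']; [exact: uN' | exact: uN].
exists N => n nN; apply: le_lt_trans (ltr_half e0).
by apply: pi_dist_small (ltW Ke) _ => k kK; exact/ltW/uN.
Qed.

Lemma pi_dist_separable : separable_dist pi_dist.
Proof.
move=> x0; pose s k := sval (cid (pm_separable (x0 k))).
have s_dense k (a : M k) (e : Defs.Real) : 0 < e -> exists n, pm_dist a (s k n) < e.
  by move: a e; rewrite /s; case: cid.
exists (fun m => if @unpickle (nat * seq nat)%type m is Some p
  then fun k => if (k < p.1)%N then s k (nth 0%N p.2 k) else x0 k else x0) => x e e0.
have e20 : 0 < e / 2 by rewrite divr_gt0.
have [K Ke] := natSinv_lt e20.
pose n k := sval (cid (s_dense k (x k) _ e20)).
have xn k : pm_dist (x k) (s k (n k)) < e / 2 by rewrite /n; case: cid.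
exists (pickle (K, mkseq n K)); rewrite pickleK.
apply: le_lt_trans (ltr_half e0); apply: pi_dist_small (ltW Ke) _ => k kK /=.
by rewrite kK nth_mkseq //; exact/ltW.
Qed.

Definition pm_pi : polishMetric :=
  PolishMetric pi_dist_metric pi_dist_complete pi_dist_separable.

Lemma pm_pi_coord_continuous k : continuous (fun x : pm_space pm_pi => x k : pm_space (M k)).
Proof.
apply: pm_continuous_dist => x e e0; exists (Num.min e k.+1%:R^-1).
  by rewrite lt_min e0 natSinv_gt0.
by move=> y; rewrite lt_min => /andP[ye yk]; exact: le_lt_trans (pi_dist_coord yk) ye.
Qed.

End countable_product.

Definition discrete_dist (n m : nat) : Defs.Real := (n != m)%:R.

Lemma discrete_dist_metric : is_metric discrete_dist.
Proof.
rewrite /discrete_dist; split; first by move=> n m; case: eqP.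
split; last split.
- by move=> n m; split=> [|->]; [case: eqP => // _ /eqP; rewrite oner_eq0 | rewrite eqxx].
- by move=> n m; rewrite eq_sym.
- move=> n m p; case: (eqVneq n m) => [->|_]; first by rewrite lerDr ler0n.
  by rewrite (le_trans (_ : _ <= 1)) ?lern1 ?leq_b1 // lerDl ler0n.
Qed.

Lemma discrete_dist_lt1 n m : discrete_dist n m < 1 -> n = m.
Proof. by rewrite /discrete_dist; case: eqVneq => //; rewrite ltxx. Qed.

Lemma discrete_dist_complete : complete_dist discrete_dist.
Proof.
move=> u /(_ 1 ltr01)[N uN]; exists (u N) => e e0; exists N => n nN.
by rewrite (discrete_dist_lt1 (uN n N nN (leqnn N))) /discrete_dist eqxx.
Qed.

Lemma discrete_dist_separable : separable_dist discrete_dist.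
Proof. by move=> _; exists id => n e e0; exists n; rewrite /discrete_dist eqxx. Qed.

Definition pm_nat : polishMetric :=
  PolishMetric discrete_dist_metric discrete_dist_complete discrete_dist_separable.

Lemma analytic_set0 (X : topologicalType) : analytic (@set0 X).
Proof.
have empty_closed : closed (@set0 (pm_space pm_nat)) by exact: closed0.
apply/analyticP; exists (pm_sub empty_closed), (fun s => False_rect X (svalP s)).
split; first by move=> [x []].
by apply/seteqP; split=> [_ [[x []]]|].
Qed.

Lemma analytic_family (X : topologicalType) (A : nat -> set X) :
  (forall n, analytic (A n)) ->
  exists (M : nat -> polishMetric) (f : forall n, pm_space (M n) -> X),
    forall n, continuous (f n) /\ range (f n) = A n.
Proof.
move=> A_analytic.
have fam n : {M : polishMetric & {f : pm_space M -> X | continuous f /\ range f = A n}}.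
  have /cid[M /cid[f Mf]] := (analyticP (A n)).1 (A_analytic n).
  by exists M, f.
exists (fun n => projT1 (fam n)), (fun n => sval (projT2 (fam n))) => n.
by case: (fam n) => M [].
Qed.

(* The union is the image of [nat x prod_m M (g m)] under
   [(n, x) |-> f (g n) (x n)], where [g] replaces the empty pieces by a nonempty
   one so that every factor of the product has a base point. *)
Lemma analytic_bigcup (X : topologicalType) (A : nat -> set X) :
  (forall n, analytic (A n)) -> analytic (\bigcup_n A n).
Proof.
move=> A_analytic.
have [[n0 An0]|A0] := pselect (exists n, A n !=set0); last first.
  suff -> : \bigcup_n A n = set0 by exact: analytic_set0.
  by apply/seteqP; split=> // x [n _ Anx]; apply: A0; exists n, x.
pose g m := if pselect (A m !=set0) then m else n0.
have Ag m : A (g m) !=set0 by rewrite /g; case: pselect.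
have [M [f Mf]] := analytic_family A_analytic.
pose N m := M (g m).
have base m : {a : N m | True}.
  by apply: cid; case: (Ag m); rewrite -(proj2 (Mf (g m))) => _ [a _ _]; exists a.
apply/analyticP; exists (pm_prod pm_nat (pm_pi N)).
exists (fun q : pm_space (pm_prod pm_nat (pm_pi N)) => f (g q.1) (q.2 q.1)); split.
  apply/pm_continuousP => -[n x] U fU.
  have [d d0 dU] := (pm_continuousP (f (g n))).1 (proj1 (Mf (g n))) (x n) U fU.
  exists (Num.min 1 (Num.min d n.+1%:R^-1)); first by rewrite !lt_min ltr01 d0 natSinv_gt0.
  move=> [m y]; rewrite !lt_min => /and3P[/(le_lt_trans (prod_dist_fst _ _))].
  move=> /discrete_dist_lt1 /= <- /(le_lt_trans (prod_dist_snd _ _)) xyd.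
  move=> /(le_lt_trans (prod_dist_snd _ _)) xyn.
  exact/dU/(le_lt_trans (pi_dist_coord xyn) xyd).
apply/seteqP; split=> [_ [[n x] _ <-] | z [k _ Akz]].
  by exists (g n) => //; rewrite -(proj2 (Mf (g n))); exists (x n).
have gk : g k = k by rewrite /g; case: pselect => // -[]; exists z.
have : range (f (g k)) z by rewrite (proj2 (Mf (g k))) gk.
case=> a _ az; exists (k, @dfwith _ N (fun m => sval (base m)) k a) => //=.
exact: etrans (congr1 (f (g k)) (dfwith_in _ _)) az.
Qed.

Lemma closed_equalizer (T X : topologicalType) (f g : T -> X) :
  hausdorff_space X -> continuous f -> continuous g -> closed [set t | f t = g t].
Proof.
move=> X_T2 cf cg t clt; apply: X_T2 => U V fU gV.
have fU' : nbhs t (f @^-1` U) by exact: cf.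
have gV' : nbhs t (g @^-1` V) by exact: cg.
have [s [fgs [/= fsU gsV]]] := clt _ (filterI fU' gV').
by exists (f s); split; last rewrite fgs.
Qed.

Lemma analytic_bigcap (X : topologicalType) (A : nat -> set X) :
  hausdorff_space X -> (forall n, analytic (A n)) -> analytic (\bigcap_n A n).
Proof.
move=> X_T2 /analytic_family[M [f Mf]].
have coord_continuous n : continuous (fun x : pm_space (pm_pi M) => f n (x n)).
  by move=> x; exact: (continuous_comp (@pm_pi_coord_continuous M n x) (proj1 (Mf n) _)).
pose C := \bigcap_n [set x : pm_space (pm_pi M) | f n (x n) = f 0%N (x 0%N)].
have C_closed : closed C.
  by apply: closed_bigI => n _; apply: closed_equalizer.
have /analyticP[N [h [ch hC]]] := analytic_closed C_closed.
apply/analyticP; exists N, (fun y => f 0%N (h y 0%N)); split.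
  by move=> y; exact: (continuous_comp (ch y) (coord_continuous 0%N _)).
apply/seteqP; split=> [_ [y _ <-] n _ | z Az].
  have /(_ n I) <- : C (h y) by rewrite -hC; exists y.
  by rewrite -(proj2 (Mf n)); exists (h y n).
have preimage n : {a : M n | f n a = z}.
  by apply: cid; have := Az n I; rewrite -(proj2 (Mf n)) => -[a _ az]; exists a.
pose x n := sval (preimage n).
have Cx : C x by move=> n _ /=; rewrite /x !(svalP (preimage _)).
have [y _ hyx] : range h x by rewrite hC.
by exists y => //; rewrite hyx /x (svalP (preimage 0%N)).
Qed.

(** * Borel sets *)

Section borel_sets.
Variable X : topologicalType.
Implicit Types A B : set X.

Lemma borel_open A : open A -> borel A.
Proof. exact: sub_sigma_algebra. Qed.

Lemma borel_set0 : borel (@set0 X).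
Proof. exact: sigma_algebra0. Qed.

Lemma borel_setC A : borel A -> borel (~` A).
Proof. by rewrite -setTD; exact: sigma_algebraCD. Qed.

Lemma borel_bigcup (F : nat -> set X) : (forall n, borel (F n)) -> borel (\bigcup_n F n).
Proof. exact: sigma_algebra_bigcup. Qed.

Lemma borel_setI A B : borel A -> borel B -> borel (A `&` B).
Proof.
move=> bA bB; rewrite -[A]setCK -[B]setCK -setCU -bigcup2E; apply: borel_setC.
apply: borel_bigcup => -[|[|n]] /=; [exact: borel_setC | exact: borel_setC |].
exact: borel_set0.
Qed.

End borel_sets.

Lemma borel_preimage (X Y : topologicalType) (f : X -> Y) (B : set Y) :
  continuous f -> borel B -> borel (f @^-1` B).
Proof.
move=> cf; apply: (@smallest_sub _ _ _ [set B | borel (f @^-1` B)]).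
  split=> /=; first by rewrite preimage_set0; exact: borel_set0.
    by move=> A /borel_setC; rewrite setTD -preimage_setC.
  by move=> F /borel_bigcup; rewrite preimage_bigcup.
move=> A oA; apply: borel_open; apply: open_comp => // x _; exact: cf.
Qed.

Lemma pm_open_bigcup_closed (M : polishMetric) (U : set (pm_space M)) : open U ->
  U = \bigcup_n [set x : pm_space M | forall y, pm_dist x y < n.+1%:R^-1 -> U y].
Proof.
move=> /pm_openP oU; apply/seteqP; split=> [x /oU[e e0 eU] | x [n _ nU]].
  by have [n ne] := natSinv_lt e0; exists n => // y /lt_trans/(_ ne)/eU.
by apply: nU; rewrite pm_distxx natSinv_gt0.
Qed.

Lemma closed_ball_subset (M : polishMetric) (U : set (pm_space M)) (r : Defs.Real) :
  closed [set x : pm_space M | forall y, pm_dist x y < r -> U y].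
Proof.
apply/pm_closedP => x xU z xz; have [|y [yU xy]] := xU (r - pm_dist x z).
  by rewrite subr_gt0.
by apply: yU; have := pm_dist_triangle y x z; rewrite (pm_distC y x); lra.
Qed.

Lemma analytic_pm_open (M : polishMetric) (U : set (pm_space M)) : open U -> analytic U.
Proof.
move=> oU; rewrite (pm_open_bigcup_closed oU); apply: analytic_bigcup => n.
by apply: analytic_closed; exact: closed_ball_subset.
Qed.

(* Both [B] and its complement are analytic, the complement of a countable union
   being a countable intersection. *)
Lemma analytic_borel (M : polishMetric) (B : set (pm_space M)) : borel B -> analytic B.
Proof.
suff : borel B -> analytic B /\ analytic (~` B) by move=> hB /hB[].
apply: (@smallest_sub _ _ _ [set B | analytic B /\ analytic (~` B)]).
  split=> /=.
  - by rewrite setC0; split; [exact: analytic_set0 | apply: analytic_closed; exact: closedT].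
  - by move=> A [AA AC]; rewrite setTD setCK.
  - move=> F FA; split; first by apply: analytic_bigcup => n; case: (FA n).
    rewrite setC_bigcup; apply: analytic_bigcap; first exact: metric_hausdorff.
    by move=> n; case: (FA n).
move=> U oU; split; first exact: analytic_pm_open.
by apply: analytic_closed; exact: open_closedC.
Qed.

Lemma analytic_setI_borel (X : topologicalType) (A B : set X) :
  analytic A -> borel B -> analytic (A `&` B).
Proof.
move=> /analyticP[M [f [cf <-]]] /(borel_preimage cf)/analytic_borel.
move=> /analyticP[N [g [cg fB]]]; apply/analyticP; exists N, (f \o g); split.
  by move=> x; apply: continuous_comp; [exact: cg | exact: cf].
apply/seteqP; split=> [_ [y _ <-] | _ [[x _ <-] Bfx]].
  have Bfgy : (f @^-1` B) (g y) by rewrite -fB; exists y.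
  by split; [exists (g y) |].
have : (f @^-1` B) x by [].
by rewrite -fB => -[y _ <-]; exists y.
Qed.

(** * Upper closures and Borel graphs *)

Lemma analytic_upclosure (T : topologicalType) (le : T -> T -> Prop) (A : set T) :
  analytic (@setT T) -> borel [set p : T * T | le p.1 p.2] ->
  analytic A -> analytic (upclosure le A).
Proof.
move=> T_analytic le_borel A_analytic.
have -> : upclosure le A = snd @` ((A `*` setT) `&` [set p | le p.1 p.2]).
  apply/seteqP; split=> [v [u Au uv] | _ [[u v] [[Au _] uv] <-]]; last by exists u.
  by exists (u, v).
apply: analytic_image (@continuous_snd _ _).
by apply: analytic_setI_borel le_borel; exact: analytic_setX.
Qed.

Lemma borel_le_opprod (F R : topologicalType) (leF : F -> F -> Prop) (leR : R -> R -> Prop) :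
  borel [set p : F * F | leF p.1 p.2] -> borel [set p : R * R | leR p.1 p.2] ->
  borel [set p : (F * R) * (F * R) | le_opprod leF leR p.1 p.2].
Proof.
move=> leF_borel leR_borel.
have -> : [set p : (F * R) * (F * R) | le_opprod leF leR p.1 p.2] =
    (fun p => (p.2.1, p.1.1)) @^-1` [set q | leF q.1 q.2] `&`
    (fun p => (p.1.2, p.2.2)) @^-1` [set q | leR q.1 q.2] by [].
apply: borel_setI; apply: borel_preimage => //; apply: continuous_pair => p.
- exact: (continuous_comp (@continuous_snd _ _ p) (@continuous_fst _ _ _)).
- exact: (continuous_comp (@continuous_fst _ _ p) (@continuous_fst _ _ _)).
- exact: (continuous_comp (@continuous_fst _ _ p) (@continuous_snd _ _ _)).
- exact: (continuous_comp (@continuous_snd _ _ p) (@continuous_snd _ _ _)).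
Qed.

Definition countably_separated (Y : topologicalType) : Prop :=
  exists B : nat -> set Y, (forall n, open (B n)) /\
    forall y z, y <> z -> exists a b, [/\ B a y, B b z & B a `&` B b = set0].

Lemma pm_ball_open (M : polishMetric) (x : pm_space M) (r : Defs.Real) :
  open [set y : pm_space M | pm_dist x y < r].
Proof.
apply/pm_openP => y /= xy; exists (r - pm_dist x y); first by rewrite subr_gt0.
by move=> z yz; have := pm_dist_triangle x y z; lra.
Qed.

(* Two points at distance [d] are separated by balls of radius [1/(m+1) < d/4]
   around points of a dense sequence. *)
Lemma pm_countably_separated (M : polishMetric) : countably_separated (pm_space M).
Proof.
have [[x0 _]|M0] := pselect (exists x : M, True); last first.
  by exists (fun=> set0); split=> [n|x]; [exact: open0 | case: M0; exists x].
have [s s_dense] := pm_separable x0.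
pose B n := if unpickle n is Some p
  then [set y : pm_space M | pm_dist (s p.1) y < p.2.+1%:R^-1] else set0.
exists B; split=> [n | y z yz].
  by rewrite /B; case: unpickle => [[a m]|]; [exact: pm_ball_open | exact: open0].
have yz0 : 0 < pm_dist y z / 4.
  rewrite divr_gt0 // lt_neqAle pm_dist_ge0 andbT eq_sym.
  by apply/negP => /eqP/pm_dist_eq0.
have [m m_small] := natSinv_lt yz0.
have [a ya] := s_dense y _ (natSinv_gt0 _ m).
have [b zb] := s_dense z _ (natSinv_gt0 _ m).
exists (pickle (a, m)), (pickle (b, m)); rewrite /B !pickleK /=.
split; [by rewrite pm_distC | by rewrite pm_distC |].
apply/seteqP; split=> // w [/= aw bw].
have := pm_dist_triangle y (s a) z; have := pm_dist_triangle (s a) w z.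
have := pm_dist_triangle z (s b) w; rewrite (pm_distC w z).
(* [set] identifies the instances of [r] coming from different structures. *)
move: m_small ya zb aw bw; set r := _.+1%:R^-1; lra.
Qed.

Lemma polish_countably_separated (P : topologicalType) : polish P -> countably_separated P.
Proof.
move=> P_polish; have [B [B_open B_sep]] := pm_countably_separated (pm_of_polish P_polish).
by exists B; split=> // n; apply/(pm_of_polish_open P_polish).
Qed.

(* The complement of the graph is the union of the Borel rectangles
   [f @^-1` B a `*` B b] over the disjoint pairs [B a], [B b]. *)
Lemma borel_graph (X Y : topologicalType) (f : X -> Y) :
  countably_separated Y -> borel_measurable f -> borel [set p : X * Y | p.2 = f p.1].
Proof.
move=> [B [B_open B_sep]] f_measurable; rewrite -[X in borel X]setCK; apply: borel_setC.
pose rect a b := [set p : X * Y | B a `&` B b = set0 /\ B a (f p.1) /\ B b p.2].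
have -> : ~` [set p : X * Y | p.2 = f p.1] = \bigcup_a \bigcup_b rect a b.
  apply/seteqP; split=> [[x y] /= yfx | [x y] [a _ [b _ [ab [/= Bafx Bby]]]] /= yfx].
    have [a [b [Bafx Bby ab]]] := B_sep (f x) y (fun e => yfx (esym e)).
    by exists a => //; exists b.
  have : (B a `&` B b) y by split; [rewrite yfx |].
  by rewrite ab.
apply: borel_bigcup => a; apply: borel_bigcup => b.
have [ab|ab] := pselect (B a `&` B b = set0); last first.
  suff -> : rect a b = set0 by exact: borel_set0.
  by apply/seteqP; split=> // p [].
have -> : rect a b = fst @^-1` (f @^-1` B a) `&` snd @^-1` B b.
  by apply/seteqP; split=> p /=; [case=> _ [] | case].
apply: borel_setI; apply: borel_preimage; [exact: continuous_fst | | exact: continuous_snd |].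
  by apply: f_measurable; exact: borel_open.
exact: borel_open.
Qed.

Lemma analytic_preimage_graph (X Y Z : topologicalType) (phi : X -> Y) (S : set (Y * Z)) :
  analytic (@setT X) -> borel [set p : X * Y | p.2 = phi p.1] ->
  analytic S -> analytic [set p : X * Z | S (phi p.1, p.2)].
Proof.
move=> X_analytic graph_borel S_analytic.
have -> : [set p : X * Z | S (phi p.1, p.2)] = (fun q => (q.1, q.2.2)) @`
    ((setT `*` S) `&` (fun q : X * (Y * Z) => (q.1, q.2.1)) @^-1` [set p | p.2 = phi p.1]).
  apply/seteqP; split=> [[x z] Sxz | _ [[x [y z]] [[_ Syz] /= yx] <-]].
    by exists (x, (phi x, z)).
  by rewrite /= -yx.
apply: analytic_image; last apply: continuous_pair.
- apply: analytic_setI_borel; first exact: analytic_setX.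
  apply: borel_preimage graph_borel; apply: continuous_pair; first exact: continuous_fst.
  by move=> q; exact: (continuous_comp (@continuous_snd _ _ q) (@continuous_fst _ _ _)).
- exact: continuous_fst.
- by move=> q; exact: (continuous_comp (@continuous_snd _ _ q) (@continuous_snd _ _ _)).
Qed.

Local Close Scope ring_scope.
Unset Implicit Arguments.
Theorem lemma7 (Omega F R : topologicalType)
  (leF : F -> F -> Prop) (leR : R -> R -> Prop) :
  polish Omega ->
  souslin F -> souslin R ->
  partial_order leF -> partial_order leR ->
  borel [set p : F * F | leF p.1 p.2] ->
  borel [set p : R * R | leR p.1 p.2] ->
  quasi_universal_space (DP_RV Omega leF leR).
Proof.
move=> Omega_polish [_ F_analytic] [_ R_analytic] _ _ leF_borel leR_borel.
have Omega_analytic : analytic (@setT Omega).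
  by exists Omega, id; split=> //; split=> [x|]; [exact: cvg_id | exact: image_id].
have FR_analytic : analytic (@setT (F * R)) by rewrite -setXTT; exact: analytic_setX.
split=> //; split=> [[dp dp_DP] | alpha phi alpha_RV phi_measurable].
  have [_ [A [A_analytic dpA]]] := dp_DP.
  rewrite /DP_RV /=.
  have -> : [set p : Omega * (F * R) | dp p.2] = setT `*` dp.
    by apply/seteqP; split=> p // [].
  rewrite dpA.
  apply: analytic_setX => //; apply: analytic_upclosure A_analytic => //.
  exact: borel_le_opprod.
apply: analytic_preimage_graph alpha_RV => //.
by apply: borel_graph phi_measurable; exact: polish_countably_separated.
Qed.
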